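(* Let $m,n$ be positive integers and let $\lambda,\mu,\nu$ be partitions of the same positive integer $N$ with $\ell(\mu)\le m$, $\ell(\nu)\le n$, $\ell(\lambda)\le mn$. Then $\mathbf b^{m,n}(\lambda,\mu,\nu;Id)=\mathbf 0$ if and only if $$\mu_u=\lambda_u+\sum_{i=m+(u-1)(n-1)+1}^{m+u(n-1)}\lambda_i\quad(u=1,\dots,m),\qquad \nu_1=\sum_{i=1}^m\lambda_i,\qquad \nu_v=\sum_{i=0}^{m-1}\lambda_{m+(n-1)i+v-1}\quad(v=2,\dots,n).$$
   Context: Partitions are padded with zeros: $\lambda=(\lambda_1,\dots,\lambda_{mn})$, $\mu=(\mu_1,\dots,\mu_m)$, $\nu=(\nu_1,\dots,\nu_n)$. Variables $s_0,\dots,s_{m-1},t_1,\dots,t_{n-2}$; $T=t_1\cdots t_{n-2}$. Monomials $x_i=s_1\cdots s_iT^i$ ($1\le i\le m-1$), $y_j=s_0s_1\cdots s_{m-1}T^{m-1}t_1\cdots t_{j-1}$ ($1\le j\le n-1$). For a monomial $M$, $e(M)\in\mathbb Z^{m+n-2}$ is its exponent vector with coordinates ordered $s_0,\dots,s_{m-1},t_1,\dots,t_{n-2}$. Let $(z_1,\dots,z_{mn})=(1,x_1,\dots,x_{m-1},y_1,\dots,y_{n-1},x_1y_1,\dots,x_1y_{n-1},x_2y_1,\dots,x_{m-1}y_{n-1})$. Then $\mathbf b^{m,n}(\lambda,\mu,\nu;Id)=e\big(\prod_{i=1}^{m-1}x_i^{\mu_{i+1}}\prod_{j=1}^{n-1}y_j^{\nu_{j+1}}\big)-e\big(\prod_{i=1}^{mn}z_i^{\lambda_i}\big)$.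 *)

From mathcomp Require Import all_boot all_order all_algebra.
Set Implicit Arguments. Unset Strict Implicit. Unset Printing Implicit Defensive.
Import GRing.Theory.

Definition is_partition_of (N : nat) (p : seq nat) : bool :=
  [&& sorted geq p, all (fun x => 0 < x) p & sumn p == N].

Definition part (p : seq nat) (i : nat) : nat := nth 0 p i.-1.

(* Monomials in s_0..s_{m-1}, t_1..t_{n-2} are represented by their exponent
   vectors; coordinate k < m is s_k, coordinate k >= m is t_{k-m+1}.
   Multiplication of monomials is addition of exponent vectors, so the
   exponent map e is the identity on this representation. *)
Definition expvec (m n : nat) := 'rV[int]_(m + (n - 2)).

Local Open Scope ring_scope.

Definition var_s (m n a : nat) : expvec m n :=
  \row_(k < m + (n - 2)) ((k == a :> nat) : nat)%:Z.
Definition var_t (m n l : nat) : expvec m n :=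
  \row_(k < m + (n - 2)) ((k == m + l.-1 :> nat) : nat)%:Z.

Definition Tmon (m n : nat) : expvec m n := \sum_(1 <= l < n.-1) var_t m n l.

Definition xmon (m n i : nat) : expvec m n :=
  \sum_(1 <= a < i.+1) var_s m n a + Tmon m n *+ i.

Definition ymon (m n j : nat) : expvec m n :=
  \sum_(0 <= a < m) var_s m n a + Tmon m n *+ (m - 1)
  + \sum_(1 <= l < j) var_t m n l.

Definition zseq (m n : nat) : seq (expvec m n) :=
  0 :: [seq xmon m n i | i <- iota 1 m.-1]
    ++ [seq ymon m n j | j <- iota 1 n.-1]
    ++ [seq xmon m n i + ymon m n j | i <- iota 1 m.-1, j <- iota 1 n.-1].

Definition zmon (m n i : nat) : expvec m n := nth 0 (zseq m n) i.-1.

Definition bvec (m n : nat) (lam mu nu : seq nat) : expvec m n :=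
  (\sum_(1 <= i < m) xmon m n i *+ part mu i.+1
   + \sum_(1 <= j < n) ymon m n j *+ part nu j.+1)
  - \sum_(1 <= i < (m * n).+1) zmon m n i *+ part lam i.

From mathcomp Require Import all_boot all_order all_algebra.
From mathcomp Require Import zify.
Set Implicit Arguments. Unset Strict Implicit. Unset Printing Implicit Defensive.
Import GRing.Theory.

(* Grouping the z_k according to whether they are divisible by x_i or by y_j
   gives b = sum_i (mu_(i+1) - xweight i) x_i + sum_j (nu_(j+1) - yweight j) y_j,
   where xweight i (resp. yweight j) is the total lambda-weight of the positions
   k for which x_i (resp. y_j) divides z_k.  The exponent vectors x_i, y_j are
   linearly independent: the s_0-coordinate of a combination is the sum of the
   y-coefficients, its s_c-coordinates add to it the tail sums of the
   x-coefficients, and its t-coordinates the tail sums of the y-coefficients.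
   Hence b = 0 exactly when mu_(i+1) = xweight i and nu_(j+1) = yweight j, which
   are the stated conditions for u, v >= 2; those for mu_1 and nu_1 follow
   from |lambda| = |mu| = |nu|. *)

Section IndexedSums.
Local Open Scope ring_scope.
Variables (T : Type) (V : nmodType).

Lemma sum_nth_cat (x0 : T) (F : T -> nat -> V) (s t : seq T) :
  \sum_(0 <= k < size (s ++ t)) F (nth x0 (s ++ t) k) k =
  \sum_(0 <= k < size s) F (nth x0 s k) k
  + \sum_(0 <= k < size t) F (nth x0 t k) (size s + k)%N.
Proof.
rewrite size_cat (@big_cat_nat _ _ _ (size s)) ?leq_addr //=; congr (_ + _).
  by apply: eq_big_nat => k /andP[_ ltks]; rewrite nth_cat ltks.
rewrite -{1}(add0n (size s)) big_addn addKn; apply: eq_bigr => k _.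
by rewrite nth_cat ltnNge leq_addl /= addnK addnC.
Qed.

Lemma sum_nth_map_iota (x0 : T) (F : T -> nat -> V) (g : nat -> T) a p :
  \sum_(0 <= k < p) F (nth x0 [seq g i | i <- iota a p] k) k =
  \sum_(0 <= k < p) F (g (a + k)%N) k.
Proof.
by apply: eq_big_nat => k /andP[_ ltkp]; rewrite (nth_map 0) ?size_iota ?nth_iota.
Qed.

Lemma sum_nth_allpairs_iota (x0 : T) (F : T -> nat -> V) (h : nat -> nat -> T)
    a b p q :
  \sum_(0 <= k < p * q) F (nth x0 [seq h i j | i <- iota a p, j <- iota b q] k) k =
  \sum_(0 <= i < p) \sum_(0 <= j < q) F (h (a + i) (b + j))%N (i * q + j)%N.
Proof.
elim: p a F => [|p IHp] a F; first by rewrite !big_geq.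
have -> : (p.+1 * q)%N =
    size ([seq h a j | j <- iota b q] ++ [seq h i j | i <- iota a.+1 p, j <- iota b q]).
  by rewrite size_cat size_map size_allpairs !size_iota mulSn.
rewrite sum_nth_cat size_map size_iota sum_nth_map_iota size_allpairs !size_iota.
rewrite (IHp a.+1 (fun z k => F z (q + k)%N)) big_nat_recl //; congr (_ + _).
  by apply: eq_bigr => j _; rewrite addn0.
by apply: eq_bigr => i _; apply: eq_bigr => j _; rewrite addSnnS mulSn addnA.
Qed.

(* [zseq m n] is [zseq_of 0 (xmon m n) (ymon m n) (fun i j => xmon m n i + ymon m n j)],
   and taking unit entries turns the sum below into a reindexing of 1..mn. *)
Definition zseq_of (z0 : T) (x y : nat -> T) (xy : nat -> nat -> T)
    (m n : nat) : seq T :=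
  z0 :: [seq x i | i <- iota 1 m.-1] ++ [seq y j | j <- iota 1 n.-1]
     ++ [seq xy i j | i <- iota 1 m.-1, j <- iota 1 n.-1].

Lemma sum_nth_zseq_of z0 (x y : nat -> T) xy (F : T -> nat -> V) m n :
  (0 < m)%N -> (0 < n)%N ->
  \sum_(1 <= k < (m * n).+1) F (nth z0 (zseq_of z0 x y xy m n) k.-1) k =
  F z0 1%N + \sum_(1 <= i < m) F (x i) i.+1 + \sum_(1 <= j < n) F (y j) (m + j)%N
  + \sum_(1 <= i < m) \sum_(1 <= j < n) F (xy i j) (m + i * (n - 1) + j)%N.
Proof.
case: m => // m; case: n => // n _ _.
have -> : (m.+1 * n.+1)%N = size (zseq_of z0 x y xy m.+1 n.+1).
  by rewrite /= !size_cat !size_map size_allpairs !size_iota; lia.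
rewrite big_add1 [size _]/= big_nat_recl // -!addrA; congr (_ + _).
apply: etrans (sum_nth_cat z0 (fun z k => F z k.+2) _ _) _.
rewrite size_map size_iota (sum_nth_cat z0 (fun z k => F z (m + k).+2)).
rewrite size_map size_iota size_allpairs !size_iota.
rewrite (sum_nth_map_iota z0 (fun z k => F z k.+2)).
rewrite (sum_nth_map_iota z0 (fun z k => F z (m + k).+2)).
rewrite (sum_nth_allpairs_iota z0 (fun z k => F z (m + (n + k)).+2)) !big_add1 /=.
congr (_ + (_ + _)).
- by apply: eq_bigr => j _; rewrite addSn addnS.
- apply: eq_bigr => i _; rewrite big_add1; apply: eq_bigr => j _.
  by rewrite !add1n; congr (F _ _); lia.
Qed.

End IndexedSums.

Section Coordinates.
Local Open Scope ring_scope.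

Lemma mulmxzE (V : zmodType) p q (A : 'M[V]_(p, q)) z i j :
  (A *~ z) i j = A i j *~ z.
Proof. by case: z => k; rewrite ?NegzE ?mulrNz ?mxE mulmxnE. Qed.

Lemma sum_indicator (lo hi k : nat) :
  \sum_(lo <= a < hi) ((k == a) : nat)%:Z = ((lo <= k < hi)%N : nat)%:Z.
Proof.
have [k_in | k_out] := boolP (lo <= k < hi)%N.
  rewrite (bigD1_seq k) ?mem_index_iota ?iota_uniq //= eqxx big1 ?addr0 //.
  by move=> a /negPf; rewrite eq_sym => ->.
rewrite big1_seq // => a /andP[_]; rewrite mem_index_iota.
by case: eqP => // <-; rewrite (negPf k_out).
Qed.

Variables m n : nat.
Implicit Type k : 'I_(m + (n - 2)).

Lemma sum_var_s_coord lo hi k :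
  (\sum_(lo <= a < hi) var_s m n a) 0 k = ((lo <= k < hi)%N : nat)%:Z.
Proof. by rewrite summxE; under eq_bigr do rewrite mxE; exact: sum_indicator. Qed.

Lemma sum_var_t_coord lo hi k : (0 < lo)%N ->
  (\sum_(lo <= l < hi) var_t m n l) 0 k =
  (((m <= k) && (lo <= k - m + 1 < hi))%N : nat)%:Z.
Proof.
move=> lo_gt0; rewrite summxE; under eq_bigr do rewrite mxE.
case: (leqP m k) => [le_mk | lt_km] /=.
  rewrite -sum_indicator; apply: eq_big_nat => l /andP[lo_l _].
  by congr (Posz (nat_of_bool _)); apply/eqP/eqP; lia.
rewrite big1_seq // => l /andP[_]; rewrite mem_index_iota.
by case: eqP => //; lia.
Qed.

Lemma Tmon_coord k : Tmon m n 0 k = ((m <= k)%N : nat)%:Z.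
Proof.
rewrite sum_var_t_coord //; congr (Posz (nat_of_bool _)).
by have := ltn_ord k; lia.
Qed.

Lemma xmon_coord_s i k : (k < m)%N -> xmon m n i 0 k = ((1 <= k <= i)%N : nat)%:Z.
Proof.
move=> lt_km; rewrite mxE mulmxnE sum_var_s_coord Tmon_coord ltnS.
by rewrite (leqNgt m) lt_km mul0rn addr0.
Qed.

Lemma xmon_coord_t i k : (m <= k)%N -> (i < m)%N -> xmon m n i 0 k = i%:Z.
Proof.
move=> le_mk lt_im; rewrite mxE mulmxnE sum_var_s_coord Tmon_coord le_mk.
have -> : (0 < k < i.+1)%N = false by lia.
by rewrite add0r natz.
Qed.

Lemma ymon_coord_s j k : (k < m)%N -> ymon m n j 0 k = 1.
Proof.
move=> lt_km; rewrite !mxE mulmxnE sum_var_s_coord sum_var_t_coord // Tmon_coord.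
by rewrite (leqNgt m) lt_km /= mul0rn !addr0.
Qed.

Lemma ymon_coord_t j k : (m <= k)%N ->
  ymon m n j 0 k = (m - 1)%:Z + ((k - m + 2 <= j)%N : nat)%:Z.
Proof.
move=> le_mk; rewrite !mxE mulmxnE sum_var_s_coord sum_var_t_coord // Tmon_coord.
rewrite le_mk ltnNge le_mk /= add0r natz; congr (_ + Posz (nat_of_bool _)); lia.
Qed.

End Coordinates.

Section Independence.
Local Open Scope ring_scope.

Lemma tail_sums_eq0 (V : zmodType) (lo hi : nat) (F : nat -> V) :
  (forall c, (lo <= c < hi)%N -> \sum_(c <= i < hi) F i = 0) ->
  forall c, (lo <= c < hi)%N -> F c = 0.
Proof.
move=> tails0 c c_in.
have next_tail0 : \sum_(c.+1 <= i < hi) F i = 0.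
  have [lt_c1_hi | ge_c1_hi] := ltnP c.+1 hi; last by rewrite big_geq.
  by apply: tails0; lia.
have := tails0 c c_in; rewrite big_ltn ?next_tail0 ?addr0 //; lia.
Qed.

Lemma sum_ge_indicator (lo c hi : nat) (F : nat -> int) : (lo <= c)%N ->
  \sum_(lo <= i < hi) ((c <= i)%N : nat)%:Z * F i = \sum_(c <= i < hi) F i.
Proof.
move=> le_lo_c; rewrite [RHS](big_nat_widenl _ _ _ _ _ le_lo_c) big_mkcond.
by apply: eq_bigr => i _; case: (c <= i)%N; rewrite ?mul1r ?mul0r.
Qed.

Lemma xmon_ymon_free m n (a b : nat -> int) : (0 < m)%N -> (0 < n)%N ->
  \sum_(1 <= i < m) xmon m n i *~ a i + \sum_(1 <= j < n) ymon m n j *~ b j = 0 ->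
  (forall i, (1 <= i < m)%N -> a i = 0) /\ (forall j, (1 <= j < n)%N -> b j = 0).
Proof.
move=> m_gt0 n_gt0 comb0.
have coord0 k (lt_k : (k < m + (n - 2))%N) :
    \sum_(1 <= i < m) xmon m n i 0 (Ordinal lt_k) * a i
    + \sum_(1 <= j < n) ymon m n j 0 (Ordinal lt_k) * b j = 0.
  have := congr1 (fun v : expvec m n => v 0 (Ordinal lt_k)) comb0.
  rewrite /= !mxE !summxE => comb0_k; rewrite -[RHS]comb0_k; congr (_ + _).
    by apply: eq_bigr => i _; rewrite mulmxzE mulrzz.
  by apply: eq_bigr => j _; rewrite mulmxzE mulrzz.
have sum_b0 : \sum_(1 <= j < n) b j = 0.
  have lt_0 : (0 < m + (n - 2))%N by lia.
  rewrite -[RHS](coord0 0%N lt_0) [X in _ = X + _]big1 ?add0r; last first.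
    by move=> i _; rewrite xmon_coord_s ?mul0r.
  by apply: eq_bigr => j _; rewrite ymon_coord_s ?mul1r.
have a0 : forall i, (1 <= i < m)%N -> a i = 0.
  apply: tail_sums_eq0 => c /andP[c_ge1 c_lt_m].
  have lt_c : (c < m + (n - 2))%N by lia.
  rewrite -(sum_ge_indicator _ _ c_ge1) -[RHS](coord0 c lt_c).
  rewrite [X in _ = _ + X](eq_bigr b); last by move=> j _; rewrite ymon_coord_s ?mul1r.
  rewrite sum_b0 addr0; apply: eq_bigr => i _.
  by rewrite xmon_coord_s //= c_ge1.
split=> //; apply: tail_sums_eq0 => c /andP[c_ge1 c_lt_n].
have [c_gt1 | c_le1] := ltnP 1 c; last by have -> : c = 1%N by lia.
have lt_c : (m + c - 2 < m + (n - 2))%N by lia.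
rewrite -(sum_ge_indicator _ _ c_ge1) -[RHS](coord0 _ lt_c).
rewrite [X in _ = X + _]big1_seq ?add0r; last first.
  by move=> i /andP[_]; rewrite mem_index_iota => i_in; rewrite a0 ?mulr0.
transitivity (\sum_(1 <= j < n) ((m - 1)%:Z * b j + ((c <= j)%N : nat)%:Z * b j)).
  by rewrite big_split /= -mulr_sumr sum_b0 mulr0 add0r.
apply: eq_bigr => j _; rewrite ymon_coord_t /=; last by lia.
by rewrite mulrDl; have -> : (m + c - 2 - m + 2 = c)%N by lia.
Qed.

End Independence.

Section Decomposition.
Local Open Scope ring_scope.
Variables (m n : nat) (lam mu nu : seq nat).

Definition xweight i : nat :=
  (part lam i.+1 + \sum_(1 <= j < n) part lam (m + i * (n - 1) + j))%N.
Definition yweight j : nat :=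
  (part lam (m + j) + \sum_(1 <= i < m) part lam (m + i * (n - 1) + j))%N.

Lemma bvec_decomp : (0 < m)%N -> (0 < n)%N ->
  bvec m n lam mu nu =
  \sum_(1 <= i < m) xmon m n i *~ ((part mu i.+1)%:Z - (xweight i)%:Z)
  + \sum_(1 <= j < n) ymon m n j *~ ((part nu j.+1)%:Z - (yweight j)%:Z).
Proof.
move=> m_gt0 n_gt0; rewrite /bvec /zmon.
rewrite (sum_nth_zseq_of 0 (xmon m n) (ymon m n) (fun i j => xmon m n i + ymon m n j)
  (fun z k => z *+ part lam k)) // mul0rn add0r.
have expand_x i : xmon m n i *~ ((part mu i.+1)%:Z - (xweight i)%:Z) =
    xmon m n i *+ part mu i.+1 - (xmon m n i *+ part lam i.+1
      + \sum_(1 <= j < n) xmon m n i *+ part lam (m + i * (n - 1) + j)).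
  by rewrite mulrzBr -!pmulrn mulrnDr sumrMnr.
have expand_y j : ymon m n j *~ ((part nu j.+1)%:Z - (yweight j)%:Z) =
    ymon m n j *+ part nu j.+1 - (ymon m n j *+ part lam (m + j)
      + \sum_(1 <= i < m) ymon m n j *+ part lam (m + i * (n - 1) + j)).
  by rewrite mulrzBr -!pmulrn mulrnDr sumrMnr.
have split_xy :
    \sum_(1 <= i < m) \sum_(1 <= j < n)
      (xmon m n i + ymon m n j) *+ part lam (m + i * (n - 1) + j) =
    \sum_(1 <= i < m) \sum_(1 <= j < n) xmon m n i *+ part lam (m + i * (n - 1) + j)
    + \sum_(1 <= j < n) \sum_(1 <= i < m) ymon m n j *+ part lam (m + i * (n - 1) + j).
  rewrite [X in _ = _ + X]exchange_big -big_split; apply: eq_bigr => i _.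
  by rewrite -big_split; apply: eq_bigr => j _; exact: mulrnDl.
rewrite (eq_bigr _ (fun i _ => expand_x i)) (eq_bigr _ (fun j _ => expand_y j)).
by rewrite !sumrB !big_split split_xy addrACA opprD addrACA.
Qed.

Lemma bvec_eq0_iff : (0 < m)%N -> (0 < n)%N ->
  bvec m n lam mu nu = 0 <->
  (forall i, (1 <= i < m)%N -> part mu i.+1 = xweight i) /\
  (forall j, (1 <= j < n)%N -> part nu j.+1 = yweight j).
Proof.
move=> m_gt0 n_gt0; rewrite bvec_decomp //; split.
  move=> /(xmon_ymon_free m_gt0 n_gt0)[x_coef0 y_coef0].
  by split=> [i /x_coef0 | j /y_coef0] /eqP; rewrite subr_eq0 => /eqP[].
case=> x_eq y_eq; rewrite !big1_seq ?addr0 // => k /andP[_];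
  rewrite mem_index_iota => k_in.
  by rewrite y_eq ?subrr ?mulr0z.
by rewrite x_eq ?subrr ?mulr0z.
Qed.

End Decomposition.

Lemma sum_part p k : size p <= k -> \sum_(1 <= i < k.+1) part p i = sumn p.
Proof.
elim: p k => [|a p IHp] k le_size_k.
  by rewrite big1 // => i _; rewrite /part nth_nil.
case: k le_size_k => // k le_size_k.
rewrite big_nat_recl //= -(IHp k) //; congr (_ + _).
by apply: eq_big_nat => i /andP[i_gt0 _]; case: i i_gt0.
Qed.

Lemma sum_part_layout m n lam : 0 < m -> 0 < n ->
  \sum_(1 <= k < (m * n).+1) part lam k =
  part lam 1 + \sum_(1 <= i < m) part lam i.+1 + \sum_(1 <= j < n) part lam (m + j)
  + \sum_(1 <= i < m) \sum_(1 <= j < n) part lam (m + i * (n - 1) + j).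
Proof.
exact: (sum_nth_zseq_of tt (fun=> tt) (fun=> tt) (fun _ _ => tt) (fun _ => part lam)).
Qed.

Lemma first_parts_of_weights m n lam mu nu : 0 < m -> 0 < n ->
  size lam <= m * n -> size mu <= m -> size nu <= n ->
  sumn mu = sumn lam -> sumn nu = sumn lam ->
  (forall i, 1 <= i < m -> part mu i.+1 = xweight m n lam i) ->
  (forall j, 1 <= j < n -> part nu j.+1 = yweight m n lam j) ->
  part mu 1 = part lam 1 + \sum_(1 <= j < n) part lam (m + j) /\
  part nu 1 = \sum_(1 <= i < m.+1) part lam i.
Proof.
move=> m_gt0 n_gt0 size_lam size_mu size_nu sum_mu sum_nu x_eq y_eq.
have := sum_part size_lam; rewrite sum_part_layout //.
have := sum_part size_mu; rewrite big_nat_recl // (eq_big_nat _ _ x_eq) big_split /=.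
have := sum_part size_nu; rewrite big_nat_recl // (eq_big_nat _ _ y_eq) big_split /=.
rewrite exchange_big big_nat_recl //=; lia.
Qed.

Lemma sum_range_shift (F : nat -> nat) m n u : 0 < u -> 0 < n ->
  \sum_(m + (u - 1) * (n - 1) + 1 <= i < (m + u * (n - 1)).+1) F i =
  \sum_(1 <= j < n) F (m + (u - 1) * (n - 1) + j).
Proof.
case: u => // u; case: n => // n _ _.
rewrite !subn1 /= addnC big_addn.
have -> : (m + u.+1 * n).+1 - (m + u * n) = n.+1 by rewrite mulSn; lia.
by apply: eq_bigr => i _; rewrite addnC.
Qed.

Lemma sum_stride_split (F : nat -> nat) m n j : 0 < m ->
  \sum_(0 <= i < m) F (m + (n - 1) * i + j.+1 - 1) =
  F (m + j) + \sum_(1 <= i < m) F (m + i * (n - 1) + j).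
Proof.
case: m => // m _; rewrite big_nat_recl // big_add1 /=.
by congr (F _ + _); [lia | apply: eq_bigr => i _; congr F; nia].
Qed.

Theorem mainTheorem3 (m n N : nat) (lam mu nu : seq nat) :
  0 < m -> 0 < n -> 0 < N ->
  is_partition_of N lam -> is_partition_of N mu -> is_partition_of N nu ->
  size mu <= m -> size nu <= n -> size lam <= m * n ->
  (bvec m n lam mu nu = 0%R <->
   [/\ (forall u, 1 <= u <= m ->
          part mu u = part lam u
            + \sum_(m + (u - 1) * (n - 1) + 1 <= i < (m + u * (n - 1)).+1) part lam i),
       part nu 1 = \sum_(1 <= i < m.+1) part lam i
     & (forall v, 2 <= v <= n ->
          part nu v = \sum_(0 <= i < m) part lam (m + (n - 1) * i + v - 1))]).
Proof.
move=> m_gt0 n_gt0 _ /and3P[_ _ /eqP <-] /and3P[_ _ /eqP sum_mu]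
  /and3P[_ _ /eqP sum_nu] size_mu size_nu size_lam.
rewrite bvec_eq0_iff //; split=> [[x_eq y_eq] | [mu_eq nu1_eq nu_eq]].
  have [mu1_eq nu1_eq] := first_parts_of_weights m_gt0 n_gt0 size_lam size_mu size_nu
    sum_mu sum_nu x_eq y_eq.
  split=> // [[|[|u]] u_in | [|[|v]] v_in] //.
  - by rewrite mu1_eq sum_range_shift // subnn mul0n addn0.
  - by rewrite sum_range_shift // x_eq /xweight ?subSS ?subn0 //; lia.
  - by rewrite (sum_stride_split (part lam)) // y_eq //; lia.
split=> [i i_in | j j_in].
  by rewrite mu_eq ?sum_range_shift ?subSS ?subn0 //; lia.
by rewrite nu_eq ?(sum_stride_split (part lam)) //; lia.
Qed.
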